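(* Consider the finite-horizon Markov decision process described in the context, with $N$ sources, $d\ge 1$ orthogonal channels, horizon $T<\infty$, transmission success probability $p\in(0,1]$ and arrival probabilities $q_1,\dots,q_N$. Let $V^*_t(x)$ be the optimal cost-to-go from epoch $t$ in state $x$ and let $V^\Delta_t(x)$ be the cost-to-go from epoch $t$ in state $x$ under the stationary policy $\pi^\Delta$. Set $$p_d := 1-(1-p)^d = p\,C_p,\qquad C_p=\sum_{l=0}^{d-1}(-1)^l\binom{d}{l+1}p^l .$$ Then there exists a sequence of non-negative functions $\{\mathcal Z_t(x)\}_{t\le T}$ on the state space such that $$V^\Delta_t(x)-V^*_t(x) = p\cdot p_d\,\mathcal Z_t(x)\quad\text{for each } t \text{ and each state } x.$$ Further there exist constants $D_1(k)$ and $D_2(k)$, $k=0,\dots,T-1$, independent of $p$, such that $$|\mathcal Z_t(x)|\le D_1(T-t)\,\|x\|_\infty + D_2(T-t),\qquad\text{where } \|x\|_\infty:=\max_{n\in\{1,\dots,N\}}\{h_n+1\}.$$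
   Context: Time is slotted, $t=1,\dots,T$. There are sources $\mathcal N=\{1,\dots,N\}$, each with a buffer of size one, and $d$ channels to a common destination. A state is $x=(\mathbf g,\mathbf h)$ with $\mathbf h=(h_1,\dots,h_N)$, $h_n$ a non-negative integer (age of information of source $n$ at the destination), and $\mathbf g=(g_1,\dots,g_N)$ with each $g_n$ either the symbol $\psi$ (source $n$ has no packet) or a non-negative integer with $g_n<h_n$ (age of the packet waiting at source $n$). Let $S_x=\{n: g_n\neq\psi\}$, $N_x=|S_x|$, $N_x^d=\min\{N_x,d\}$. At each epoch $t<T$ the admissible actions in state $x$ are the subsets $\mathbf a\subseteq S_x$ with $|\mathbf a|=N_x^d$ (so no transmission if $N_x=0$). Transitions: given state $x$ and action $\mathbf a$, each source in $\mathbf a$ is independently successfully transferred with probability $p$ (let $W\subseteq\mathbf a$ be the successful set), and independently each source $n$ receives a new packet with probability $q_n$ (let $\mathcal C$ be the set of sources receiving a new packet); all these events are independent. The next state is: $h_n'=g_n+1$ if $n\in W$, $h_n'=h_n+1$ otherwise; $g_n'=0$ if $n\in\mathcal C$; $g_n'=\psi$ if $n\in W\setminus\mathcal C$; $g_n'=g_n+1$ if $n\notin\mathcal C\cup W$ (with $\psi+1=\psi$). The per-stage cost at every epoch $t=1,\dots,T$ is $c(x)=\sum_{n=1}^N h_n$. Thus $V^*_T(x)=V^\Delta_T(x)=\sum_n h_n$, and for $t<T$, $V^*_t(x)=\min_{\mathbf a}\big[c(x)+\mathbb E[V^*_{t+1}(X')\mid x,\mathbf a]\big]$, i.e. $V^*_t(x)$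 is the minimum over all (possibly non-stationary, history-dependent) policies of the expected total cost $\mathbb E[\sum_{s=t}^T c(X(s))]$ started from $X(t)=x$; $V^\Delta_t(x)$ is the same expected total cost when actions are chosen by $\pi^\Delta$. The policy $\pi^\Delta$ uses, at every epoch $t<T$, the decision rule $d^\Delta(x)\in\arg\min_{\mathbf a}\sum_{i\in\mathbf a}(g_i-h_i)$ over admissible actions $\mathbf a$ (i.e., among sources with packets, choose the $N_x^d$ sources with largest $h_i-g_i$). *)

From HB Require Import structures.
From mathcomp Require Import all_boot all_order all_algebra.
Set Implicit Arguments. Unset Strict Implicit. Unset Printing Implicit Defensive.
Import Order.TTheory GRing.Theory Num.Theory.
Local Open Scope ring_scope.

(* A state x = (g, h): g n = None encodes the symbol psi (no packet),
   g n = Some k encodes a waiting packet of age k; h n = AoI of source n. *)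
Definition state (N : nat) : Type :=
  ({ffun 'I_N -> option nat} * {ffun 'I_N -> nat})%type.

Definition gst N (x : state N) := x.1.
Definition hst N (x : state N) := x.2.

Definition valid_state N (x : state N) : Prop :=
  forall n : 'I_N, match gst x n with Some k => (k < hst x n)%N | None => true end.

Definition Sx N (x : state N) : {set 'I_N} := [set n | gst x n != None].

Definition admissible N (d : nat) (x : state N) (a : {set 'I_N}) : bool :=
  (a \subset Sx x) && (#|a| == minn #|Sx x| d).

(* next state given successful set W and arrival set C *)
Definition next_state N (x : state N) (W C : {set 'I_N}) : state N :=
  ([ffun n => if n \in C then Some 0%N
              else if n \in W then None else omap S (gst x n)],
   [ffun n => if n \in W then (odflt 0%N (gst x n)).+1 else (hst x n).+1]).

Definition trans_prob (R : ringType) N (p : R) (q : 'I_N -> R)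
    (a W C : {set 'I_N}) : R :=
  (if W \subset a then p ^+ #|W| * (1 - p) ^+ (#|a| - #|W|) else 0) *
  \prod_(n : 'I_N) (if n \in C then q n else 1 - q n).

Definition expect (R : ringType) N (p : R) (q : 'I_N -> R)
    (f : state N -> R) (x : state N) (a : {set 'I_N}) : R :=
  \sum_(W : {set 'I_N}) \sum_(C : {set 'I_N})
     trans_prob p q a W C * f (next_state x W C).

Definition cost (R : ringType) N (x : state N) : R :=
  \sum_(n : 'I_N) (hst x n)%:R.

Definition min_adm (R : realDomainType) N (d : nat) (x : state N)
    (F : {set 'I_N} -> R) : R :=
  let s := [seq F a | a : {set 'I_N} in admissible d x] in
  foldr Num.min (head 0 s) s.

(* optimal cost-to-go with k epochs remaining after the current one *)
Fixpoint Vopt (R : realDomainType) N (d : nat) (p : R) (q : 'I_N -> R)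
    (k : nat) (x : state N) : R :=
  match k with
  | 0%N => cost R x
  | k'.+1 => min_adm d x (fun a => cost R x + expect p q (Vopt d p q k') x a)
  end.

Fixpoint Vpol (R : ringType) N (dr : state N -> {set 'I_N}) (p : R)
    (q : 'I_N -> R) (k : nat) (x : state N) : R :=
  match k with
  | 0%N => cost R x
  | k'.+1 => cost R x + expect p q (Vpol dr p q k') x (dr x)
  end.

Definition Vstar (R : realDomainType) N d (p : R) q (T t : nat) (x : state N) : R :=
  Vopt d p q (T - t) x.
Definition VDelta (R : ringType) N (dr : state N -> {set 'I_N}) (p : R) q
    (T t : nat) (x : state N) : R :=
  Vpol dr p q (T - t) x.

Definition gh_score N (x : state N) (a : {set 'I_N}) : int :=
  \sum_(i in a) ((odflt 0%N (gst x i))%:Z - (hst x i)%:Z).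

Definition is_delta_rule N (d : nat) (dr : state N -> {set 'I_N}) : Prop :=
  forall x : state N, valid_state x ->
    admissible d x (dr x) /\
    forall a, admissible d x a -> gh_score x (dr x) <= gh_score x a.

Definition state_norm N (x : state N) : nat := \max_(n : 'I_N) (hst x n).+1.

From HB Require Import structures.
From mathcomp Require Import all_boot all_order all_algebra.
From mathcomp Require Import ring lra.
Import Order.TTheory GRing.Theory Num.Theory.
Local Open Scope ring_scope.
Set Implicit Arguments. Unset Strict Implicit. Unset Printing Implicit Defensive.

(* With k epochs to go, the optimal cost-to-go is the idle value (k+1) c(x) + N k(k+1)/2
   (the cost if nothing were ever delivered) minus a gain; deliveries succeed only with
   probability p, so by induction this gain is p times an affine function of ||x||.
   The Q-factor of an action a is then the idle value, minus (k+1) p sum_{n in a} (h_n - g_n),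
   minus the expected gain after a.  The Delta-rule maximises that sum, and admissible
   actions all have the same size, so their expected gains coincide on the event that no
   transmission succeeds; the complementary event has probability 1 - (1-p)^|a| <= |a| p,
   and on it the gains differ by at most the O(p) bound on the gain.  Each Delta-step thus
   loses O(p^2), whence V^Delta - V^opt <= p^2 (gamma ||x|| + theta) by induction on the
   horizon; since p <= p_d for d >= 1, Z := (V^Delta - V^opt)/(p p_d) has an affine bound
   independent of p. *)

Section TransitionLaw.
Variables (R : comNzRingType) (N : nat) (p : R) (q : 'I_N -> R).
Implicit Types (a W C : {set 'I_N}) (n : 'I_N) (x : state N).

Definition success_prob (a W : {set 'I_N}) : R :=
  if W \subset a then p ^+ #|W| * (1 - p) ^+ (#|a| - #|W|) else 0.

Definition arrival_prob (C : {set 'I_N}) : R :=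
  \prod_n (if n \in C then q n else 1 - q n).

Lemma trans_probE a W C : trans_prob p q a W C = success_prob a W * arrival_prob C.
Proof. by []. Qed.

Lemma sum_arrival_prob : \sum_(C : {set 'I_N}) arrival_prob C = 1.
Proof.
rewrite -(bigA_distr 1 +%R) /=; apply: big1 => n _.
by rewrite addrC subrK.
Qed.

Lemma success_probE a W :
  success_prob a W =
  \prod_n (if n \in W then (if n \in a then p else 0)
           else (if n \in a then 1 - p else 1)).
Proof.
rewrite (bigID (mem W)) /=.
rewrite (eq_bigr (fun n => if n \in a then p else 0)); last by move=> n ->.
rewrite [X in _ * X](eq_bigr (fun n => if n \in a then 1 - p else 1)); last first.
  by move=> n /negbTE ->.
rewrite /success_prob; case: (boolP (W \subset a)) => [sWa|/subsetPn[n nW na]].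
  rewrite (eq_bigr (fun => p)); last by move=> n nW; rewrite (subsetP sWa).
  rewrite prodr_const -big_mkcondr /= prodr_const -(cardsID W a) (setIidPr sWa).
  by rewrite addKn; do 2 f_equal; apply: eq_card => n; rewrite !inE.
by rewrite (bigD1 n nW) /= (negbTE na) !mul0r.
Qed.

Lemma sum_success_prob a : \sum_(W : {set 'I_N}) success_prob a W = 1.
Proof.
under eq_bigr do rewrite success_probE.
rewrite -(bigA_distr 1 +%R) /=; apply: big1 => n _.
by case: (n \in a); rewrite ?add0r // addrC subrK.
Qed.

Lemma success_prob_set0 a : success_prob a set0 = (1 - p) ^+ #|a|.
Proof. by rewrite /success_prob sub0set cards0 mul1r subn0. Qed.

Lemma sum_success_prob_mem a n :
  \sum_(W : {set 'I_N}) (if n \in W then success_prob a W else 0) = if n \in a then p else 0.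
Proof.
pose F i := if i \in a then p else 0.
pose G i := if i == n then 0 else if i \in a then 1 - p else 1.
transitivity (\sum_(W : {set 'I_N}) \prod_i (if i \in W then F i else G i)).
  apply: eq_bigr => W _; rewrite success_probE; case: ifP => nW.
    apply: eq_bigr => i _; rewrite /F /G; case: ifP => // iW.
    by case: eqP => // ein; rewrite ein nW in iW.
  by rewrite (bigD1 n) //= nW /G eqxx mul0r.
rewrite -(bigA_distr 1 +%R) /= (bigD1 n) //= big1 ?mulr1; first by rewrite /G eqxx addr0.
move=> i /negbTE ni; rewrite /F /G ni.
by case: (i \in a); rewrite ?add0r // addrC subrK.
Qed.

Lemma sum_success_prob_sum a (f : 'I_N -> R) :
  \sum_(W : {set 'I_N}) success_prob a W * \sum_(n in W) f n = p * \sum_(n in a) f n.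
Proof.
transitivity (\sum_(W : {set 'I_N}) \sum_n (if n \in W then success_prob a W else 0) * f n).
  apply: eq_bigr => W _; rewrite big_distrr /= big_mkcond /=.
  by apply: eq_bigr => n _; case: ifP; rewrite ?mul0r.
rewrite exchange_big /= big_distrr /= [RHS]big_mkcond /=.
apply: eq_bigr => n _; rewrite -big_distrl /= sum_success_prob_mem.
by case: ifP; rewrite ?mul0r ?mulr0 // mulrC.
Qed.

Lemma expectE (f : state N -> R) x a :
  expect p q f x a =
  \sum_(W : {set 'I_N}) success_prob a W * \sum_(C : {set 'I_N}) arrival_prob C * f (next_state x W C).
Proof.
apply: eq_bigr => W _; rewrite big_distrr /=.
by apply: eq_bigr => C _; rewrite trans_probE mulrA.
Qed.

Lemma expect_cst (c : R) x a : expect p q (fun => c) x a = c.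
Proof.
rewrite expectE -[RHS]mul1r -(sum_success_prob a) big_distrl /=.
by apply: eq_bigr => W _; rewrite -big_distrl /= sum_arrival_prob mul1r.
Qed.

Lemma expectD (f g : state N -> R) x a :
  expect p q (fun z => f z + g z) x a = expect p q f x a + expect p q g x a.
Proof.
rewrite /expect -big_split; apply: eq_bigr => W _; rewrite -big_split.
by apply: eq_bigr => C _; rewrite mulrDr.
Qed.

Lemma expectB (f g : state N -> R) x a :
  expect p q (fun z => f z - g z) x a = expect p q f x a - expect p q g x a.
Proof.
rewrite /expect -sumrB; apply: eq_bigr => W _; rewrite -sumrB.
by apply: eq_bigr => C _; rewrite mulrBr.
Qed.

Lemma expectZ (c : R) (f : state N -> R) x a :
  expect p q (fun z => c * f z) x a = c * expect p q f x a.
Proof.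
rewrite /expect big_distrr; apply: eq_bigr => W _; rewrite big_distrr.
by apply: eq_bigr => C _; rewrite mulrCA.
Qed.

Definition age_drop (x : state N) (n : 'I_N) : R :=
  (hst x n)%:R - (odflt 0%N (gst x n))%:R.

Lemma cost_next_state x W C :
  cost R (next_state x W C) = cost R x + N%:R - \sum_(n in W) age_drop x n.
Proof.
rewrite -[N in N%:R]card_ord -sumr_const /cost [X in _ - X]big_mkcond /=.
rewrite -big_split -sumrB; apply: eq_bigr => n _.
rewrite /hst /next_state /age_drop /= ffunE.
by case: ifP => _; rewrite -addn1 natrD; ring.
Qed.

Lemma expect_cost x a :
  expect p q (@cost R N) x a = cost R x + N%:R - p * \sum_(n in a) age_drop x n.
Proof.
have inner W : \sum_(C : {set 'I_N}) arrival_prob C * cost R (next_state x W C) =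
    cost R x + N%:R - \sum_(n in W) age_drop x n.
  under eq_bigr do rewrite cost_next_state.
  by rewrite -big_distrl /= sum_arrival_prob mul1r.
rewrite expectE; under eq_bigr do rewrite inner mulrBr.
by rewrite sumrB -big_distrl /= sum_success_prob mul1r sum_success_prob_sum.
Qed.

End TransitionLaw.

Section TransitionBounds.
Variables (R : realDomainType) (N : nat) (p : R) (q : 'I_N -> R).
Hypotheses (p01 : 0 <= p <= 1) (q01 : forall n, 0 <= q n <= 1).
Implicit Types (a b W C : {set 'I_N}) (n : 'I_N) (x : state N) (f g : state N -> R).

Lemma success_prob_ge0 a W : 0 <= success_prob p a W.
Proof.
case/andP: p01 => p0 p1; rewrite /success_prob; case: ifP => // _.
by rewrite mulr_ge0 // exprn_ge0 // subr_ge0.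
Qed.

Lemma arrival_prob_ge0 C : 0 <= arrival_prob q C.
Proof.
by apply: prodr_ge0 => n _; case/andP: (q01 n) => q0 q1; case: ifP; rewrite ?subr_ge0.
Qed.

Lemma ler_expect f g x a :
  (forall W C, f (next_state x W C) <= g (next_state x W C)) ->
  expect p q f x a <= expect p q g x a.
Proof.
move=> fg; rewrite !expectE; apply: ler_sum => W _.
rewrite ler_wpM2l ?success_prob_ge0 //; apply: ler_sum => C _.
by rewrite ler_wpM2l ?arrival_prob_ge0.
Qed.

Lemma expect_bounded f x a lo hi :
  (forall W C, lo <= f (next_state x W C) <= hi) -> lo <= expect p q f x a <= hi.
Proof.
move=> hf; apply/andP; split.
  rewrite -[X in X <= _](expect_cst p q lo x a).
  by apply: ler_expect => W C; case/andP: (hf W C).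
rewrite -[X in _ <= X](expect_cst p q hi x a).
by apply: ler_expect => W C; case/andP: (hf W C).
Qed.

Lemma onem_exprn_le m : 1 - (1 - p) ^+ m <= m%:R * p.
Proof.
case/andP: p01 => p0 p1; elim: m => [|m IH]; first by rewrite expr0 subrr mul0r.
have y1 : (1 - p) ^+ m <= 1 by rewrite exprn_ile1 // ?subr_ge0 // lerBlDr lerDl.
have -> : 1 - (1 - p) ^+ m.+1 = (1 - (1 - p) ^+ m) + p * (1 - p) ^+ m.
  by rewrite exprS; ring.
rewrite -natr1 mulrDl mul1r; apply: lerD IH _.
by rewrite -[X in _ <= X]mulr1 ler_wpM2l.
Qed.

Lemma ler_onem_exprn m : (0 < m)%N -> p <= 1 - (1 - p) ^+ m.
Proof.
case: m => // m _; case/andP: p01 => p0 p1.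
have y1 : (1 - p) ^+ m <= 1 by rewrite exprn_ile1 // ?subr_ge0 // lerBlDr lerDl.
rewrite -subr_ge0 exprSr.
have -> : 1 - (1 - p) ^+ m * (1 - p) - p = (1 - (1 - p) ^+ m) * (1 - p) by ring.
by rewrite mulr_ge0 // subr_ge0.
Qed.

Lemma expect_sub_eq_card f x a b M :
  #|a| = #|b| -> (forall W C, 0 <= f (next_state x W C) <= M) ->
  expect p q f x a - expect p q f x b <= #|a|%:R * p * M.
Proof.
move=> ab hf.
pose avg W := \sum_(C : {set 'I_N}) arrival_prob q C * f (next_state x W C).
have avg_bounded W : 0 <= avg W <= M.
  apply/andP; split.
    by apply: sumr_ge0 => C _; rewrite mulr_ge0 ?arrival_prob_ge0 //; case/andP: (hf W C).
  rewrite -[X in _ <= X]mul1r -(sum_arrival_prob q) big_distrl /=.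
  by apply: ler_sum => C _; rewrite ler_wpM2l ?arrival_prob_ge0 //; case/andP: (hf W C).
have M0 : 0 <= M by case/andP: (avg_bounded set0) => avg0; apply: le_trans.
have expect_set0 c : expect p q f x c =
    (1 - p) ^+ #|c| * avg set0 + \sum_(W | W != set0) success_prob p c W * avg W.
  by rewrite expectE (bigD1 set0) //= success_prob_set0.
rewrite !expect_set0 -ab.
set A := \sum_(W | W != set0) success_prob p a W * avg W.
set B := \sum_(W | W != set0) success_prob p b W * avg W.
have B0 : 0 <= B.
  by apply: sumr_ge0 => W _; rewrite mulr_ge0 ?success_prob_ge0 //; case/andP: (avg_bounded W).
have AM : A <= (1 - (1 - p) ^+ #|a|) * M.
  have -> : 1 - (1 - p) ^+ #|a| = \sum_(W | W != set0) success_prob p a W.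
    rewrite -[X in X - _](sum_success_prob p a) (bigD1 set0) //= success_prob_set0.
    by rewrite addrAC subrr add0r.
  rewrite big_distrl /=; apply: ler_sum => W _.
  by rewrite ler_wpM2l ?success_prob_ge0 //; case/andP: (avg_bounded W).
have := ler_wpM2r M0 (onem_exprn_le #|a|).
lra.
Qed.

End TransitionBounds.

Section StateBounds.
Variable N : nat.
Implicit Types (a W C : {set 'I_N}) (n : 'I_N) (x : state N).

Lemma valid_next_state x W C : valid_state x -> valid_state (next_state x W C).
Proof.
move=> vx n; rewrite /gst /hst /next_state /= !ffunE.
case: ifP => nC; case: ifP => nW //=.
by move: (vx n); rewrite /gst /hst; case: (x.1 n).
Qed.

Lemma hst_lt_state_norm x n : (hst x n < state_norm x)%N.
Proof. exact: (@leq_bigmax _ (fun n => (hst x n).+1) n). Qed.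

Lemma gst_le_hst x n : valid_state x -> (odflt 0 (gst x n) <= hst x n)%N.
Proof. by move=> /(_ n); case: (gst x n) => //= k /ltnW. Qed.

Lemma state_norm_next x W C :
  valid_state x -> (state_norm (next_state x W C) <= (state_norm x).+1)%N.
Proof.
move=> vx; apply/bigmax_leqP => n _; rewrite /hst /next_state /= ffunE ltnS.
case: ifP => _; last exact: hst_lt_state_norm.
exact: leq_ltn_trans (gst_le_hst n vx) (hst_lt_state_norm x n).
Qed.

Lemma gh_scoreE (R : numDomainType) x a :
  (gh_score x a)%:~R = - \sum_(n in a) age_drop R x n :> R.
Proof.
rewrite /gh_score rmorph_sum /= -sumrN; apply: eq_bigr => n _.
by rewrite /age_drop rmorphB /= opprB.
Qed.

Lemma sum_age_drop_bounds (R : realDomainType) x a : valid_state x ->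
  0 <= \sum_(n in a) age_drop R x n <= N%:R * (state_norm x)%:R.
Proof.
move=> vx; have drop_ge0 n : 0 <= age_drop R x n by rewrite subr_ge0 ler_nat gst_le_hst.
apply/andP; split; first exact: sumr_ge0.
apply: le_trans (_ : \sum_(n in a) ((state_norm x)%:R : R) <= _).
  apply: ler_sum => n _; rewrite lerBlDr ler_wpDr // ler_nat ltnW //.
  exact: hst_lt_state_norm.
rewrite sumr_const -(mulr_natl _ #|a|); apply: ler_wpM2r => //; rewrite ler_nat.
by apply: leq_trans (max_card _) _; rewrite card_ord.
Qed.

End StateBounds.

Section AdmissibleMin.
Variables (R : realDomainType) (N d : nat) (x : state N) (F : {set 'I_N} -> R).

Lemma min_adm_le a : admissible d x a -> min_adm d x F <= F a.
Proof. by move=> ad; rewrite /min_adm foldrE; apply: ge_bigmin_seq => //; apply: image_f. Qed.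

Lemma min_adm_attained a0 : admissible d x a0 ->
  exists2 a, admissible d x a & min_adm d x F = F a.
Proof.
move=> ad0; rewrite /min_adm foldrE.
set s := [seq F a | a in admissible d x].
have : \big[Num.min/head 0 s]_(y <- s) y \in s.
  rewrite big_seq; apply: (big_ind (fun y => y \in s)) => //.
    have : F a0 \in s by apply: image_f.
    by case: s => //= y s' _; rewrite mem_head.
  by move=> u v us vs; rewrite minEle; case: ifP.
by move=> /imageP [a ada ->]; exists a.
Qed.

End AdmissibleMin.

Fixpoint idle_drift (N k : nat) : nat :=
  if k is k'.+1 then idle_drift N k' + k'.+1 * N else 0.

Lemma idle_driftS N k : idle_drift N k.+1 = idle_drift N k + k.+1 * N.
Proof. by []. Qed.

Fixpoint gain_offset (N k : nat) : nat :=
  if k is k'.+1 then gain_offset N k' + idle_drift N k' else 0.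

Lemma gain_offsetS N k : gain_offset N k.+1 = gain_offset N k + idle_drift N k.
Proof. by []. Qed.

Fixpoint gap_slope (N k : nat) : nat :=
  if k is k'.+1 then gap_slope N k' + N * idle_drift N k' else 0.

Fixpoint gap_offset (N k : nat) : nat :=
  if k is k'.+1 then
    gap_offset N k' + gap_slope N k' + N * (idle_drift N k' + gain_offset N k')
  else 0.

Section DeltaRule.
Variables (R : realDomainType) (N d : nat) (p : R) (q : 'I_N -> R).
Variable dr : state N -> {set 'I_N}.
Hypotheses (p01 : 0 <= p <= 1) (q01 : forall n, 0 <= q n <= 1).
Hypothesis hdr : is_delta_rule d dr.
Implicit Types (a W C : {set 'I_N}) (n : 'I_N) (x : state N) (k : nat).

Definition idle_value k x : R := k.+1%:R * cost R x + (idle_drift N k)%:R.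

Definition opt_gain k x : R := idle_value k x - Vopt d p q k x.

Definition opt_qfactor k x a : R := cost R x + expect p q (Vopt d p q k) x a.

Definition policy_gap k x : R := Vpol dr p q k x - Vopt d p q k x.

Lemma expect_idle_value k x a :
  expect p q (idle_value k) x a =
  k.+1%:R * (cost R x + N%:R - p * \sum_(n in a) age_drop R x n) + (idle_drift N k)%:R.
Proof. by rewrite /idle_value expectD expectZ expect_cst expect_cost. Qed.

Lemma opt_qfactorE k x a :
  opt_qfactor k x a =
  idle_value k.+1 x - k.+1%:R * p * \sum_(n in a) age_drop R x n
  - expect p q (opt_gain k) x a.
Proof.
have gainE : expect p q (opt_gain k) x a =
    expect p q (idle_value k) x a - expect p q (Vopt d p q k) x a := expectB _ _ _ _ _ _.
rewrite /opt_qfactor gainE expect_idle_value {1}/idle_value /= natrD natrM -[k.+2]addn1 natrD.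
ring.
Qed.

Lemma opt_gain_bounds k x : valid_state x ->
  0 <= opt_gain k x <= p * ((idle_drift N k)%:R * (state_norm x)%:R + (gain_offset N k)%:R).
Proof.
elim: k x => [|k IH] x vx.
  by rewrite /opt_gain /idle_value /= mul1r addr0 subrr mul0r add0r mulr0 lexx.
have [a ada Ea] := min_adm_attained (opt_qfactor k x) (hdr vx).1.
have -> : opt_gain k.+1 x = idle_value k.+1 x - opt_qfactor k x a by rewrite -Ea.
rewrite opt_qfactorE.
have /andP[E0 E1] : 0 <= expect p q (opt_gain k) x a <=
    p * ((idle_drift N k)%:R * ((state_norm x)%:R + 1) + (gain_offset N k)%:R).
  apply: expect_bounded => // W C.
  have /andP[g0 g1] := IH _ (valid_next_state W C vx); rewrite g0 /=.
  apply: le_trans g1 _; case/andP: p01 => p0 _.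
  by rewrite ler_wpM2l // lerD2r ler_wpM2l // natr1 ler_nat state_norm_next.
have /andP[S0 S1] := sum_age_drop_bounds R a vx.
have kpS : k.+1%:R * p * \sum_(n in a) age_drop R x n <=
    k.+1%:R * p * (N%:R * (state_norm x)%:R).
  by case/andP: p01 => p0 _; rewrite ler_wpM2l ?mulr_ge0.
have kpS0 : 0 <= k.+1%:R * p * \sum_(n in a) age_drop R x n.
  by case/andP: p01 => p0 _; rewrite !mulr_ge0.
rewrite idle_driftS gain_offsetS !natrD natrM.
lra.
Qed.

Lemma delta_rule_qfactor_excess k x a : valid_state x -> admissible d x a ->
  opt_qfactor k x (dr x) - opt_qfactor k x a <=
  N%:R * p * (p * ((idle_drift N k)%:R * ((state_norm x)%:R + 1) + (gain_offset N k)%:R)).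
Proof.
move=> vx ada; have [adr greedy] := hdr vx; case/andP: (p01) => p0 p1.
set M := p * (_ + _).
have gain_next W C : 0 <= opt_gain k (next_state x W C) <= M.
  have /andP[g0 g1] := opt_gain_bounds k (valid_next_state W C vx); rewrite g0 /=.
  apply: le_trans g1 _.
  by rewrite ler_wpM2l // lerD2r ler_wpM2l // natr1 ler_nat state_norm_next.
have M0 : 0 <= M by case/andP: (gain_next set0 set0) => g0; apply: le_trans.
have card_eq : #|a| = #|dr x|.
  by move: ada adr => /andP[_ /eqP ->] /andP[_ /eqP ->].
have coupling := expect_sub_eq_card p01 q01 card_eq gain_next.
have card_le : #|a|%:R * p * M <= N%:R * p * M.
  rewrite -!mulrA; apply: ler_wpM2r; first by rewrite mulr_ge0.
  by rewrite ler_nat; apply: leq_trans (max_card _) _; rewrite card_ord.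
have greedy_drop : k.+1%:R * p * \sum_(n in a) age_drop R x n <=
    k.+1%:R * p * \sum_(n in dr x) age_drop R x n.
  by rewrite ler_wpM2l ?mulr_ge0 // -lerN2 -!gh_scoreE ler_int greedy.
rewrite !opt_qfactorE.
lra.
Qed.

Lemma policy_gap_bounds k x : valid_state x ->
  0 <= policy_gap k x <= p * p * ((gap_slope N k)%:R * (state_norm x)%:R + (gap_offset N k)%:R).
Proof.
elim: k x => [|k IH] x vx.
  by rewrite /policy_gap /= subrr mul0r add0r mulr0 lexx.
have [a ada Ea] := min_adm_attained (opt_qfactor k x) (hdr vx).1.
have gapE : expect p q (policy_gap k) x (dr x) =
    expect p q (Vpol dr p q k) x (dr x) - expect p q (Vopt d p q k) x (dr x) :=
  expectB _ _ _ _ _ _.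
have -> : policy_gap k.+1 x =
    expect p q (policy_gap k) x (dr x) + (opt_qfactor k x (dr x) - opt_qfactor k x a).
  by rewrite /policy_gap /= Ea gapE /opt_qfactor; ring.
have Q_ge : 0 <= opt_qfactor k x (dr x) - opt_qfactor k x a.
  by rewrite subr_ge0 -Ea; apply: min_adm_le (hdr vx).1.
have Q_le := delta_rule_qfactor_excess k vx ada.
have /andP[E0 E1] : 0 <= expect p q (policy_gap k) x (dr x) <=
    p * p * ((gap_slope N k)%:R * ((state_norm x)%:R + 1) + (gap_offset N k)%:R).
  apply: expect_bounded => // W C.
  have /andP[g0 g1] := IH _ (valid_next_state W C vx); rewrite g0 /=.
  apply: le_trans g1 _; case/andP: p01 => p0 _.
  by rewrite ler_wpM2l ?mulr_ge0 // lerD2r ler_wpM2l // natr1 ler_nat state_norm_next.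
rewrite /= !natrD !natrM.
lra.
Qed.

End DeltaRule.

Theorem theorem1 (R : realFieldType) (N d T : nat) (q : 'I_N -> R)
    (dr : state N -> {set 'I_N}) :
  (1 <= d)%N ->
  (forall n, 0 <= q n <= 1) ->
  is_delta_rule d dr ->
  exists D1 D2 : nat -> R,
    forall p : R, 0 < p <= 1 ->
      let pd := 1 - (1 - p) ^+ d in
      exists Z : nat -> state N -> R,
        forall (t : nat) (x : state N), (1 <= t <= T)%N -> valid_state x ->
          [/\ 0 <= Z t x,
              VDelta dr p q T t x - Vstar d p q T t x = p * pd * Z t x
            & `|Z t x| <= D1 (T - t)%N * (state_norm x)%:R + D2 (T - t)%N].
Proof.
move=> d_gt0 q01 hdr; exists (fun k => (gap_slope N k)%:R), (fun k => (gap_offset N k)%:R).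
move=> p /andP[p_gt0 p_le1] pd; have p01 : 0 <= p <= 1 by rewrite ltW.
have p_le_pd : p <= pd := ler_onem_exprn p01 d_gt0.
have ppd_gt0 : 0 < p * pd by rewrite mulr_gt0 // (lt_le_trans p_gt0 p_le_pd).
exists (fun t x => policy_gap d p q dr (T - t) x / (p * pd)) => t x _ vx.
have /andP[gap_ge0 gap_le] := policy_gap_bounds p01 q01 hdr (T - t) vx.
have Z_ge0 : 0 <= policy_gap d p q dr (T - t) x / (p * pd) by rewrite divr_ge0 // ltW.
split => //; first by rewrite mulrC divfK // gt_eqF.
rewrite ger0_norm // ler_pdivrMr //; apply: le_trans gap_le _.
rewrite mulrC; apply: ler_wpM2l; first by rewrite addr_ge0 ?mulr_ge0.
by rewrite ler_wpM2l // ltW.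
Qed.
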